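(* Let $X$ be a proper geodesic metric space. If $X$ is Morse-dichotomous, then $\partial_* X$ is strongly $\sigma$-compact.
   Context: A Morse gauge is a non-decreasing continuous $M:\mathbb{R}_{\ge1}\to\mathbb{R}_{\ge0}$; a quasi-geodesic $\gamma$ is $M$--Morse if every $Q$--quasi-geodesic with endpoints $\gamma(s),\gamma(t)$ lies in the closed $M(Q)$--neighbourhood of $\gamma[s,t]$. A geodesic $\gamma$ is $C$--contracting if for every $x\in X$ the closest-point projection to $\gamma$ of the ball $B_{d(x,\gamma)}(x)$ has diameter at most $C$. $X$ is Morse-dichotomous if the converse of ''contracting implies Morse'' holds: for every Morse gauge $M$ there is $C$ such that every $M$--Morse geodesic is $C$--contracting. With basepoint $x_0$, $\partial_*X$ is the set of Morse geodesic rays from $x_0$ up to bounded Hausdorff distance, and $\partial^M_{x_0}X$ the subset represented by $M$--Morse rays from $x_0$. $\partial_*X$ is strongly $\sigma$-compact if there is an increasing sequence of Morse gauges $(M_n)$ with $\partial_*X=\bigcup_n\partial^{M_n}_{x_0}X$ such that for every Morse gauge $M$ there is $n$ with $\partial^M_{x_0}X\subset\partial^{M_n}_{x_0}X$. *)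

From HB Require Import structures.
From mathcomp Require Import all_boot all_order all_algebra.
From mathcomp Require Import all_classical all_reals all_analysis.
Set Implicit Arguments. Unset Strict Implicit. Unset Printing Implicit Defensive.
Import Order.TTheory GRing.Theory Num.Theory.
Import numFieldNormedType.Exports.
Local Open Scope classical_set_scope.
Local Open Scope ring_scope.

Section MorseDefs.
Context {R : realType} {X : metricType R}.
Local Notation d := (@mdist R X).

Definition proper_space : Prop :=
  forall (x : X) (r : R), compact [set y | d x y <= r].

Definition geodesic (g : R -> X) (I : set R) : Prop :=
  is_interval I /\ I !=set0 /\
  forall s t, I s -> I t -> d (g s) (g t) = `|s - t|.

Definition geodesic_space : Prop :=
  forall x y : X, exists (g : R -> X) (a b : R),
    a <= b /\ geodesic g `[a, b] /\ g a = x /\ g b = y.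

(* Q-quasi-geodesic = (Q,Q)-quasi-isometric embedding of [a,b] *)
Definition quasi_geodesic (Q : R) (q : R -> X) (a b : R) : Prop :=
  a <= b /\ forall s t, a <= s <= b -> a <= t <= b ->
    `|s - t| / Q - Q <= d (q s) (q t) /\ d (q s) (q t) <= Q * `|s - t| + Q.

Definition dist_set (x : X) (A : set X) : R := inf [set d x a | a in A].

Definition closed_nbhd (r : R) (A : set X) : set X :=
  [set p | dist_set p A <= r].

Definition morse_gauge (M : R -> R) : Prop :=
  (forall Q, 1 <= Q -> 0 <= M Q) /\
  (forall Q Q', 1 <= Q -> Q <= Q' -> M Q <= M Q') /\
  {within `[1, +oo[%classic, continuous M}.

Definition morse (M : R -> R) (g : R -> X) (I : set R) : Prop :=
  forall s t, I s -> I t -> s <= t ->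
  forall Q, 1 <= Q ->
  forall (q : R -> X) (a b : R), quasi_geodesic Q q a b ->
    q a = g s -> q b = g t ->
    forall u, a <= u <= b -> closed_nbhd (M Q) (g @` `[s, t]) (q u).

Definition cproj (g : R -> X) (I : set R) (y : X) : set X :=
  [set p | (g @` I) p /\ d y p = dist_set y (g @` I)].

(* C-contracting: projection of the (open) ball B_{d(x,g)}(x) has diameter <= C *)
Definition contracting (C : R) (g : R -> X) (I : set R) : Prop :=
  forall x y1 y2 p1 p2,
    d x y1 < dist_set x (g @` I) -> d x y2 < dist_set x (g @` I) ->
    cproj g I y1 p1 -> cproj g I y2 p2 -> d p1 p2 <= C.

Definition morse_dichotomous : Prop :=
  forall M, morse_gauge M -> exists C : R,
    forall g I, geodesic g I -> morse M g I -> contracting C g I.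

Definition geodesic_ray_from (x0 : X) (g : R -> X) : Prop :=
  geodesic g `[0, +oo[ /\ g 0 = x0.

Definition morse_ray_from (x0 : X) (g : R -> X) : Prop :=
  geodesic_ray_from x0 g /\ exists M, morse_gauge M /\ morse M g `[0, +oo[.

Definition hausdorff_bounded (A B : set X) : Prop :=
  exists K : R,
    (forall a, A a -> exists2 b, B b & d a b <= K) /\
    (forall b, B b -> exists2 a, A a & d a b <= K).

Definition ray_class (x0 : X) (g : R -> X) : set (R -> X) :=
  [set g' | morse_ray_from x0 g' /\
            hausdorff_bounded (g @` `[0, +oo[) (g' @` `[0, +oo[)].

Definition morse_boundary (x0 : X) : set (set (R -> X)) :=
  ray_class x0 @` morse_ray_from x0.

Definition morse_boundary_M (x0 : X) (M : R -> R) : set (set (R -> X)) :=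
  ray_class x0 @` [set g | geodesic_ray_from x0 g /\ morse M g `[0, +oo[].

Definition strongly_sigma_compact (x0 : X) : Prop :=
  exists Ms : nat -> R -> R,
    (forall n, morse_gauge (Ms n)) /\
    (forall n Q, 1 <= Q -> Ms n Q <= Ms n.+1 Q) /\
    morse_boundary x0 = \bigcup_n morse_boundary_M x0 (Ms n) /\
    (forall M, morse_gauge M -> exists n,
        morse_boundary_M x0 M `<=` morse_boundary_M x0 (Ms n)).

End MorseDefs.

From HB Require Import structures.
From mathcomp Require Import all_boot all_order all_algebra.
From mathcomp Require Import all_classical all_reals all_analysis.
From mathcomp Require Import lra.

(* A contracting ray is Morse with a gauge depending only on its contraction
   constant [K].  Sample a [Q]-quasi-geodesic with endpoints [g s], [g t] on
   the ray at mesh [2 K Q].  Along a run of samples far from the ray, contraction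
   moves the closest-point projections by at most [K] per step while the samples
   advance by about [2 K] per step, so such runs are short and every sample stays
   uniformly close to the ray; comparing projections with [s] and [t] then puts
   every sample uniformly close to [g [s, t]].  The gauges for [K = 1, 2, ...]
   exhaust the Morse boundary, and by Morse-dichotomy every [M]-Morse ray is
   [C]-contracting for a single [C], hence Morse for the gauge with [K > C]. *)

Set Implicit Arguments.
Unset Strict Implicit.
Unset Printing Implicit Defensive.

Import Order.TTheory GRing.Theory Num.Theory.
Import numFieldNormedType.Exports.
Local Open Scope classical_set_scope.
Local Open Scope ring_scope.

Lemma last_index_le (P : pred nat) i : P 0%N ->
  exists j, [/\ (j <= i)%N, P j & forall m, (j < m <= i)%N -> ~~ P m].
Proof.
move=> P0; have ex : exists j, (j <= i)%N && P j by exists 0%N; rewrite leq0n.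
have ub j : (j <= i)%N && P j -> (j <= i)%N by case/andP.
case: (ex_maxnP ex ub) => j /andP[ji Pj] jmax.
exists j; split=> // m /andP[jm mi]; apply/negP => Pm.
by have := jmax m; rewrite mi Pm leqNgt jm => /(_ isT).
Qed.

Lemma first_index_ge (P : pred nat) i N : (i <= N)%N -> P N ->
  exists k, [/\ (i <= k <= N)%N, P k & forall m, (i <= m < k)%N -> ~~ P m].
Proof.
move=> iN PN; have ex : exists k, [&& (i <= k)%N, (k <= N)%N & P k].
  by exists N; rewrite iN leqnn PN.
case: (ex_minnP ex) => k /and3P[ik kN Pk] kmin.
exists k; split; rewrite ?ik // => m /andP[im mk]; apply/negP => Pm.
have := kmin m; rewrite im Pm (leq_trans (ltnW mk) kN) leqNgt mk.
by move=> /(_ isT).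
Qed.

Lemma maximal_run_around (P : pred nat) i N : (i <= N)%N -> P 0%N -> P N -> ~~ P i ->
  exists j k, [/\ (j < i < k)%N, (k <= N)%N, P j, P k
    & forall m, (j < m < k)%N -> ~~ P m].
Proof.
move=> iN P0 PN nPi.
have [j [ji Pj j_last]] := last_index_le i P0.
have [k [/andP[ik kN] Pk k_first]] := first_index_ge iN PN.
exists j, k; split=> //.
  rewrite !ltn_neqAle ji ik !andbT.
  by apply/andP; split; [apply: contraTneq Pj => -> | apply: contraTneq Pk => <-].
move=> m /andP[jm mk]; have [mi|im] := leqP m i.
  by apply: j_last; rewrite jm mi.
by apply: k_first; rewrite (ltnW im) mk.
Qed.

Section MetricFacts.
Context {R : realType} {X : metricType R}.
Local Notation d := (@mdist R X).

Lemma ler_mdist_dist (y a b : X) : `|d y a - d y b| <= d a b.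
Proof.
have yab := metric_triangle y a b; have yba := metric_triangle y b a.
rewrite (metric_sym b a) in yba; rewrite ler_norml; apply/andP; split; lra.
Qed.

Lemma dist_set_le (x : X) (A : set X) a : A a -> dist_set x A <= d x a.
Proof.
move=> Aa; apply: ge_inf; last by exists a.
by exists 0 => _ [b _ <-]; exact: mdist_ge0.
Qed.

End MetricFacts.

Section PathBounds.
Context {R : realFieldType}.

Definition path_ray_bound (S c0 : R) : R := S + (3 * S + c0 + 1) * S.

Definition path_segment_bound (S c0 : R) : R :=
  path_ray_bound S c0 + (3 * path_ray_bound S c0 + S + c0) * S.

Lemma path_ray_bound_ge (S c0 : R) : 0 <= S -> 0 <= c0 -> S <= path_ray_bound S c0.
Proof.
move=> S0 c0_ge0; rewrite /path_ray_bound lerDl mulr_ge0 //; lra.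
Qed.

Lemma path_ray_bound_mono (S S' c0 c0' : R) : 0 <= S -> S <= S' -> 0 <= c0 -> c0 <= c0' ->
  path_ray_bound S c0 <= path_ray_bound S' c0'.
Proof.
move=> S0 SS' c0_ge0 cc'; rewrite /path_ray_bound lerD // ler_pM //; lra.
Qed.

Lemma path_segment_bound_mono (S S' c0 c0' : R) : 0 <= S -> S <= S' -> 0 <= c0 -> c0 <= c0' ->
  path_segment_bound S c0 <= path_segment_bound S' c0'.
Proof.
move=> S0 SS' c0_ge0 cc'; rewrite /path_segment_bound.
have AA' := path_ray_bound_mono S0 SS' c0_ge0 cc'.
have A_ge := path_ray_bound_ge S0 c0_ge0.
rewrite lerD // ler_pM //; lra.
Qed.

End PathBounds.

Section RayProjection.
Context {R : realType} {X : metricType R}.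
Local Notation d := (@mdist R X).
Local Notation I0 := (`[0, +oo[%classic : set R).

Lemma ray_domainP (r : R) : I0 r <-> 0 <= r.
Proof. by rewrite /= in_itv /= andbT. Qed.

Variable g : R -> X.
Hypothesis g_isometry : forall s t, 0 <= s -> 0 <= t -> d (g s) (g t) = `|s - t|.

Definition ray_dist (y : X) : R := dist_set y (g @` I0).

Lemma ray_dist_le y r : 0 <= r -> ray_dist y <= d y (g r).
Proof. by move=> r0; apply: dist_set_le; exists r => //; apply/ray_domainP. Qed.

(* Minimise [r |-> d y (g |r|)], which is 1-Lipschitz, over [0, 2 d(y, g 0)];
   beyond that interval the distance only grows. *)
Lemma ray_proj_exists y : exists2 r, 0 <= r & d y (g r) = ray_dist y.
Proof.
pose f (r : R) := d y (g `|r|).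
have f_cont : continuous f.
  move=> r; apply/cvgrPdist_lt => e e0; apply/nbhs_normP; exists e => //= r' rr'.
  apply: le_lt_trans (ler_mdist_dist _ _ _) _; rewrite g_isometry //.
  exact: le_lt_trans (ler_dist_dist _ _) rr'.
have L_ge0 : 0 <= 2 * d y (g 0) by rewrite mulr_ge0 ?mdist_ge0.
have [c] := EVT_min L_ge0 (continuous_subspaceT f_cont).
rewrite in_itv /= => /andP[c0 _] cmin.
have fE r : 0 <= r -> f r = d y (g r) by move=> r0; rewrite /f ger0_norm.
have c_min r : 0 <= r -> d y (g c) <= d y (g r).
  move=> r0; rewrite -fE // -fE //.
  have [rL|Lr] := lerP r (2 * d y (g 0)); first by apply: cmin; rewrite in_itv /= r0.
  apply: le_trans (cmin 0 _) _; first by rewrite in_itv /= lexx.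
  have := metric_triangle (g 0) y (g r).
  rewrite g_isometry ?lexx // sub0r normrN ger0_norm // metric_sym fE ?lexx // fE //.
  lra.
exists c => //; apply/eqP; rewrite eq_le ray_dist_le // andbT.
rewrite /ray_dist /dist_set; apply: lb_le_inf.
  by exists (d y (g c)), (g c) => //; exists c => //; apply/ray_domainP.
by move=> _ [_ [r /ray_domainP r0 <-] <-]; apply: c_min.
Qed.

Definition ray_proj (y : X) : R := s2val (cid2 (ray_proj_exists y)).

Lemma ray_proj_ge0 y : 0 <= ray_proj y.
Proof. by rewrite /ray_proj; case: cid2. Qed.

Lemma dist_ray_proj y : d y (g (ray_proj y)) = ray_dist y.
Proof. by rewrite /ray_proj; case: cid2. Qed.

Lemma ray_dist_ge0 y : 0 <= ray_dist y.
Proof. by rewrite -dist_ray_proj mdist_ge0. Qed.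

Lemma ray_dist_lipschitz y z : ray_dist y <= d y z + ray_dist z.
Proof.
have := ray_dist_le y (ray_proj_ge0 z).
have := metric_triangle y z (g (ray_proj z)).
rewrite dist_ray_proj; lra.
Qed.

Lemma ray_dist_on_ray s : 0 <= s -> ray_dist (g s) = 0.
Proof.
move=> s0; apply/eqP; rewrite eq_le ray_dist_ge0 andbT.
by rewrite -(mdistxx (g s)) ray_dist_le.
Qed.

Lemma ray_proj_on_ray s : 0 <= s -> ray_proj (g s) = s.
Proof.
move=> s0; apply/eqP; rewrite -subr_eq0 -normr_eq0 -g_isometry ?ray_proj_ge0 //.
by rewrite metric_sym dist_ray_proj ray_dist_on_ray.
Qed.

Lemma dist_ray_point_le y w : 0 <= w -> d y (g w) <= ray_dist y + `|ray_proj y - w|.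
Proof.
move=> w0; rewrite -dist_ray_proj -g_isometry ?ray_proj_ge0 //.
exact: metric_triangle.
Qed.

Lemma dist_le_ray_proj y z :
  d y z <= ray_dist y + `|ray_proj y - ray_proj z| + ray_dist z.
Proof.
have := dist_ray_point_le y (ray_proj_ge0 z).
have := metric_triangle y (g (ray_proj z)) z.
rewrite (metric_sym (g (ray_proj z)) z) dist_ray_proj; lra.
Qed.

Lemma ray_proj_dist_le y z :
  `|ray_proj y - ray_proj z| <= ray_dist y + d y z + ray_dist z.
Proof.
rewrite -g_isometry ?ray_proj_ge0 // -!dist_ray_proj.
have := metric_triangle (g (ray_proj y)) y (g (ray_proj z)).
have := metric_triangle y z (g (ray_proj z)).
rewrite (metric_sym (g (ray_proj y)) y); lra.
Qed.

Variable K : R.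
Hypothesis g_contracting : contracting K g I0.

Lemma ray_proj_contracting y z : d y z < ray_dist y ->
  `|ray_proj y - ray_proj z| <= K.
Proof.
move=> yz; rewrite -g_isometry ?ray_proj_ge0 //.
have cproj_ray_proj w : cproj g I0 w (g (ray_proj w)).
  split; last exact: dist_ray_proj.
  by exists (ray_proj w) => //; apply/ray_domainP; exact: ray_proj_ge0.
apply: (g_contracting _ yz (cproj_ray_proj y) (cproj_ray_proj z)).
by rewrite mdistxx; exact: le_lt_trans (mdist_ge0 _ _) yz.
Qed.

Section CoarsePath.
Hypothesis K_ge1 : 1 <= K.
Variables (x : nat -> X) (N : nat) (s t S c0 : R).
Hypotheses (s_ge0 : 0 <= s) (le_st : s <= t) (S_ge0 : 0 <= S) (c0_ge0 : 0 <= c0).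
Hypotheses (x_first : x 0%N = g s) (x_last : x N = g t).
Hypothesis x_step : forall i, (i < N)%N -> d (x i) (x i.+1) <= S.
Hypothesis x_lower : forall i j, (i <= j <= N)%N ->
  (j - i)%:R * (2 * K) - c0 <= d (x i) (x j).

Local Notation A := (path_ray_bound S c0).

Lemma path_dist_le i j : (i <= j <= N)%N -> d (x i) (x j) <= (j - i)%:R * S.
Proof.
move=> /andP[]; elim: j => [|j IH] ij jN.
  by move: ij; rewrite leqn0 => /eqP->; rewrite mdistxx subnn mul0r.
move: ij; rewrite leq_eqVlt => /orP[/eqP->|ij]; first by rewrite mdistxx subnn mul0r.
have := IH ij (ltnW jN); have := x_step jN.
have := metric_triangle (x i) (x j) (x j.+1).
rewrite subSn // -natr1; lra.
Qed.

Lemma path_ray_proj_le j k : (j <= k <= N)%N ->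
  (forall m, (j <= m < k)%N -> S < ray_dist (x m)) ->
  `|ray_proj (x j) - ray_proj (x k)| <= (k - j)%:R * K.
Proof.
move=> /andP[]; elim: k => [|k IH] jk kN far.
  by move: jk; rewrite leqn0 => /eqP->; rewrite subrr normr0 subnn mul0r.
move: jk; rewrite leq_eqVlt => /orP[/eqP->|]; first by rewrite subrr normr0 subnn mul0r.
rewrite ltnS => jk.
have far_k : S < ray_dist (x k) by apply: far; rewrite jk ltnSn.
have far_IH m : (j <= m < k)%N -> S < ray_dist (x m).
  by case/andP=> jm mk; apply: far; rewrite jm ltnS ltnW.
have := IH jk (ltnW kN) far_IH.
have := ray_proj_contracting (le_lt_trans (x_step kN) far_k).
have := ler_distD (ray_proj (x k)) (ray_proj (x j)) (ray_proj (x k.+1)).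
rewrite subSn // -natr1; lra.
Qed.

Lemma path_index_gap_le i j D : (i <= j <= N)%N -> d (x i) (x j) <= D ->
  (j - i)%:R <= D + c0.
Proof.
move=> ijN ijD; have := x_lower ijN.
have : (j - i)%:R * 1 <= (j - i)%:R * (2 * K).
  by apply: ler_wpM2l; [exact: ler0n | move: K_ge1; lra].
lra.
Qed.

(* Along a run of points far from the ray the projection moves by at most [K]
   per step while the path moves by at least [2 K] per step, so the run is short. *)
Lemma far_run_short j k : (j <= k <= N)%N ->
  (forall m, (j <= m < k)%N -> S < ray_dist (x m)) ->
  (k - j)%:R <= ray_dist (x j) + ray_dist (x k) + c0.
Proof.
move=> jkN far; have := path_ray_proj_le jkN far.
have := dist_le_ray_proj (x j) (x k); have := x_lower jkN.
have : (k - j)%:R * 1 <= (k - j)%:R * K by apply: ler_wpM2l; first exact: ler0n.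
lra.
Qed.

Lemma path_ray_dist_le i : (i <= N)%N -> ray_dist (x i) <= A.
Proof.
move=> iN; have [near|far_i] := lerP (ray_dist (x i)) S.
  exact: le_trans near (path_ray_bound_ge S_ge0 c0_ge0).
pose P := [pred m | ray_dist (x m) <= S].
have P0 : P 0%N by rewrite inE x_first ray_dist_on_ray.
have PN : P N by rewrite inE x_last ray_dist_on_ray // (le_trans s_ge0 le_st).
have nPi : ~~ P i by rewrite inE -ltNge.
have [j [k [/andP[lt_ji lt_ik] kN Pj Pk far]]] := maximal_run_around iN P0 PN nPi.
have far_run m : (j.+1 <= m < k)%N -> S < ray_dist (x m).
  by move=> jmk; rewrite ltNge; exact: far.
have jkN : (j.+1 <= k <= N)%N by rewrite kN andbT (leq_trans lt_ji (ltnW lt_ik)).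
have run := far_run_short jkN far_run.
have jN : (j < N)%N := leq_trans lt_ji iN.
have near_j1 := ray_dist_lipschitz (x j.+1) (x j).
have step_j := x_step jN; rewrite metric_sym in step_j.
move: Pj Pk; rewrite !inE => Pj Pk.
have gap : (i - j)%:R <= 3 * S + c0 + 1.
  have : (i - j <= (k - j.+1).+1)%N.
    by rewrite subnSK ?(ltn_trans lt_ji lt_ik) // leq_sub2r // ltnW.
  rewrite -(ler_nat R) -natr1 => ij_le; lra.
have near_i := ray_dist_lipschitz (x i) (x j); rewrite metric_sym in near_i.
have := @path_dist_le j i; rewrite (ltnW lt_ji) iN => /(_ isT).
have := ler_wpM2r S_ge0 gap; rewrite /path_ray_bound; lra.
Qed.

Lemma path_ray_proj_step i : (i < N)%N ->
  `|ray_proj (x i) - ray_proj (x i.+1)| <= 2 * A + S.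
Proof.
move=> iN; have := ray_proj_dist_le (x i) (x i.+1).
have := path_ray_dist_le (ltnW iN); have := path_ray_dist_le iN; have := x_step iN.
lra.
Qed.

(* The first index [k > i] whose projection passes [s] lies within [3 A + S]
   of [g s = x 0], so there are few indices before it. *)
Lemma path_near_start i : (i <= N)%N -> ray_proj (x i) < s ->
  d (x i) (g s) <= (3 * A + S + c0) * S.
Proof.
move=> iN before.
pose P := [pred m | s <= ray_proj (x m)].
have PN : P N by rewrite inE x_last ray_proj_on_ray // (le_trans s_ge0 le_st).
have [k [/andP[ik kN] Pk k_first]] := first_index_ge iN PN.
have lt_ik : (i < k)%N.
  by rewrite ltn_neqAle ik andbT; apply: contraTneq Pk => <-; rewrite inE -ltNge.
case: k => [//|k] in ik kN Pk k_first lt_ik *.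
have prev : ray_proj (x k) < s by rewrite ltNge; apply: k_first; rewrite -ltnS lt_ik /=.
have near_k : d (x k.+1) (g s) <= 3 * A + S.
  move: Pk; rewrite inE => Pk.
  have := ler_norm (ray_proj (x k.+1) - ray_proj (x k)); rewrite distrC.
  have := dist_ray_point_le (x k.+1) s_ge0; rewrite ger0_norm ?subr_ge0 //.
  have := path_ray_proj_step kN; have := path_ray_dist_le kN; lra.
have few : (k.+1 - 0)%:R <= 3 * A + S + c0.
  by apply: path_index_gap_le; [rewrite kN | rewrite x_first metric_sym].
have dist_i : d (x 0) (x i) <= (i - 0)%:R * S by apply: path_dist_le; rewrite iN.
rewrite x_first metric_sym !subn0 in dist_i few.
have ik_le : i%:R <= k.+1%:R :> R by rewrite ler_nat ltnW.
have := ler_wpM2r S_ge0 (le_trans ik_le few); lra.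
Qed.

Lemma path_near_end i : (i <= N)%N -> t < ray_proj (x i) ->
  d (x i) (g t) <= (3 * A + S + c0) * S.
Proof.
move=> iN after; have t_ge0 := le_trans s_ge0 le_st.
pose P := [pred m | ray_proj (x m) <= t].
have P0 : P 0%N by rewrite inE x_first ray_proj_on_ray.
have [j [ji Pj j_last]] := last_index_le i P0.
have lt_ji : (j < i)%N.
  by rewrite ltn_neqAle ji andbT; apply: contraTneq Pj => ->; rewrite inE -ltNge.
have jN : (j < N)%N := leq_trans lt_ji iN.
have next : t < ray_proj (x j.+1) by rewrite ltNge; apply: j_last; rewrite ltnSn.
have near_j : d (x j) (g t) <= 3 * A + S.
  move: Pj; rewrite inE => Pj.
  have := dist_ray_point_le (x j) t_ge0; rewrite distrC ger0_norm ?subr_ge0 //.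
  have := ler_norm (ray_proj (x j.+1) - ray_proj (x j)); rewrite distrC.
  have := path_ray_proj_step jN; have := path_ray_dist_le (ltnW jN); lra.
have few : (N - j)%:R <= 3 * A + S + c0.
  by apply: path_index_gap_le; [rewrite (ltnW jN) leqnn | rewrite x_last].
have dist_i : d (x i) (x N) <= (N - i)%:R * S by apply: path_dist_le; rewrite iN leqnn.
rewrite x_last in dist_i.
have ij_le : (N - i)%:R <= (N - j)%:R :> R by rewrite ler_nat leq_sub2l.
have := ler_wpM2r S_ge0 (le_trans ij_le few); lra.
Qed.

Lemma path_near_segment i : (i <= N)%N ->
  exists2 r, s <= r <= t & d (x i) (g r) <= path_segment_bound S c0.
Proof.
move=> iN; have A_ge0 : 0 <= A by apply: le_trans (path_ray_bound_ge S_ge0 c0_ge0).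
have B_ge : (3 * A + S + c0) * S <= path_segment_bound S c0.
  by rewrite /path_segment_bound lerDr.
have [before|after_s] := ltP (ray_proj (x i)) s.
  by exists s; [rewrite lexx le_st | exact: le_trans (path_near_start iN before) B_ge].
have [after|before_t] := ltP t (ray_proj (x i)).
  by exists t; [rewrite lexx le_st | exact: le_trans (path_near_end iN after) B_ge].
exists (ray_proj (x i)); first by rewrite after_s before_t.
rewrite dist_ray_proj; apply: le_trans (path_ray_dist_le iN) _.
by rewrite /path_segment_bound lerDl mulr_ge0 // addr_ge0 // addr_ge0 // mulr_ge0.
Qed.

End CoarsePath.

End RayProjection.

Section IntervalSampling.
Context {R : archiRealFieldType}.

Lemma interval_sampling (a b h : R) : a <= b -> 0 < h ->
  exists (v : nat -> R) (N : nat), [/\ v 0%N = a, v N = b,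
    forall i, a <= v i <= b,
    forall i j, (i <= j <= N)%N ->
      (j - i)%:R * h - h <= v j - v i <= (j - i)%:R * h
  & forall u, a <= u <= b -> exists2 i, (i <= N)%N & `|u - v i| <= h].
Proof.
move=> ab h_gt0; pose T := Num.truncn ((b - a) / h).
have T_le : T%:R * h <= b - a.
  by rewrite -ler_pdivlMr // truncn_le divr_ge0 //; lra.
have T_gt : b - a < T.+1%:R * h by rewrite -ltr_pdivrMr // truncnS_gt.
rewrite -natr1 in T_gt.
pose v i : R := Num.min (a + i%:R * h) b.
have step_ge0 i : 0 <= i%:R * h by rewrite mulr_ge0 ?ler0n // ltW.
have v_cases i : (v i = a + i%:R * h /\ a + i%:R * h <= b) \/ (v i = b /\ b < a + i%:R * h).
  by rewrite /v; case: lerP => c; [left | right].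
exists v, T.+1; split.
- by rewrite /v mul0r addr0 min_l.
- by rewrite /v min_r //; lra.
- by move=> i; have := step_ge0 i; case: (v_cases i) => -[-> ci] hi; apply/andP; split; lra.
- move=> i j /andP[ij jT].
  have ih_jh : i%:R * h <= j%:R * h by rewrite ler_wpM2r ?ler_nat // ltW.
  have jh : j%:R * h - h <= T%:R * h.
    by rewrite -{2}(mul1r h) -mulrBl ler_wpM2r ?(ltW h_gt0) // lerBlDr natr1 ler_nat.
  rewrite natrB // mulrBl.
  by case: (v_cases i) => -[-> ci]; case: (v_cases j) => -[-> cj]; apply/andP; split; lra.
- move=> u /andP[au ub]; pose i := Num.truncn ((u - a) / h).
  have ua_ge0 : 0 <= (u - a) / h by rewrite divr_ge0 //; lra.
  have i_le : i%:R * h <= u - a by rewrite -ler_pdivlMr // truncn_le.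
  have i_gt : u - a < i.+1%:R * h by rewrite -ltr_pdivrMr // truncnS_gt.
  rewrite -natr1 in i_gt.
  exists i; first by rewrite leqW // le_truncn // ler_wpM2r ?invr_ge0 ?(ltW h_gt0) //; lra.
  by rewrite /v min_l ?ger0_norm; lra.
Qed.

End IntervalSampling.

Section ContractionGauge.
Context {R : realType}.

Definition sample_jump (K Q : R) : R := 2 * K * (Q * Q) + Q.

Definition sample_defect (K Q : R) : R := 2 * K + Q.

Definition contraction_gauge (K Q : R) : R :=
  path_segment_bound (sample_jump K Q) (sample_defect K Q) + sample_jump K Q.

Lemma contraction_gauge_mono (K K' Q Q' : R) : 0 <= K -> K <= K' -> 0 <= Q -> Q <= Q' ->
  contraction_gauge K Q <= contraction_gauge K' Q'.
Proof.
move=> K0 KK' Q0 QQ'.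
have QQ : Q * Q <= Q' * Q' by rewrite ler_pM.
have KQQ : 2 * K * (Q * Q) <= 2 * K' * (Q' * Q').
  by rewrite ler_pM ?mulr_ge0 //; lra.
have jump_ge0 : 0 <= sample_jump K Q by rewrite addr_ge0 // !mulr_ge0.
have jump_le : sample_jump K Q <= sample_jump K' Q' by rewrite lerD.
have defect_le : sample_defect K Q <= sample_defect K' Q'.
  by rewrite /sample_defect; lra.
rewrite /contraction_gauge lerD // path_segment_bound_mono //.
by rewrite /sample_defect; lra.
Qed.

Lemma contraction_gauge0 : contraction_gauge 0 0 = 0.
Proof.
rewrite /contraction_gauge /path_segment_bound /path_ray_bound /sample_jump.
by rewrite /sample_defect !(mulr0, mul0r, addr0).
Qed.

Let continuous_add (u w : R -> R) : continuous u -> continuous w ->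
  continuous (fun Q => u Q + w Q).
Proof. by move=> u_cont w_cont Q; apply: cvgD; [exact: u_cont | exact: w_cont]. Qed.

Let continuous_mul (u w : R -> R) : continuous u -> continuous w ->
  continuous (fun Q => u Q * w Q).
Proof. by move=> u_cont w_cont Q; apply: cvgM; [exact: u_cont | exact: w_cont]. Qed.

Let continuous_const (k : R) : continuous (fun _ : R => k).
Proof. exact: cst_continuous. Qed.

Local Ltac continuity := repeat first
  [ assumption | exact: continuous_const
  | apply: continuous_add | apply: continuous_mul ].

Lemma contraction_gauge_continuous (K : R) : continuous (contraction_gauge K).
Proof.
have id_cont : continuous (fun Q : R => Q) by move=> Q; exact: cvg_id.
have jump_cont : continuous (sample_jump K) by rewrite /sample_jump; continuity.
have defect_cont : continuous (sample_defect K) by rewrite /sample_defect; continuity.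
have A_cont : continuous (fun Q => path_ray_bound (sample_jump K Q) (sample_defect K Q)).
  by rewrite /path_ray_bound; continuity.
by rewrite /contraction_gauge /path_segment_bound; continuity.
Qed.

Lemma morse_gauge_contraction (K : R) : 0 <= K -> morse_gauge (contraction_gauge K).
Proof.
move=> K0; split; [|split].
- by move=> Q Q1; rewrite -contraction_gauge0 contraction_gauge_mono //; lra.
- by move=> Q Q' Q1 QQ'; apply: contraction_gauge_mono => //; lra.
- exact/continuous_subspaceT/contraction_gauge_continuous.
Qed.

End ContractionGauge.

Section ContractingMorse.
Context {R : realType} {X : metricType R}.
Local Notation d := (@mdist R X).
Local Notation I0 := (`[0, +oo[%classic : set R).

Lemma quasi_geodesic_dist_le (K Q : R) (q : R -> X) (a b w w' : R) :
  0 <= Q -> quasi_geodesic Q q a b -> a <= w <= b -> a <= w' <= b ->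
  `|w - w'| <= 2 * K * Q -> d (q w) (q w') <= sample_jump K Q.
Proof.
move=> Q_ge0 [_ q_qg] aw aw' ww'; have [_ up] := q_qg w w' aw aw'.
have := ler_wpM2l Q_ge0 ww'; rewrite /sample_jump; lra.
Qed.

Lemma quasi_geodesic_dist_ge (K Q : R) (q : R -> X) (a b w w' n : R) :
  0 < Q -> quasi_geodesic Q q a b -> a <= w <= b -> a <= w' <= b ->
  (n - 1) * (2 * K * Q) <= `|w - w'| -> n * (2 * K) - sample_defect K Q <= d (q w) (q w').
Proof.
move=> Q_gt0 [_ q_qg] aw aw' ww'; have [low _] := q_qg w w' aw aw'.
have : (n - 1) * (2 * K) <= `|w - w'| / Q.
  by rewrite ler_pdivlMr // -mulrA.
rewrite /sample_defect; lra.
Qed.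

Lemma contracting_ray_morse (g : R -> X) (K : R) : 1 <= K ->
  geodesic g I0 -> contracting K g I0 -> morse (contraction_gauge K) g I0.
Proof.
move=> K_ge1 [_ [_ g_geod]] g_contr.
have g_isometry s t : 0 <= s -> 0 <= t -> d (g s) (g t) = `|s - t|.
  by move=> s0 t0; apply: g_geod; apply/ray_domainP.
move=> s t /ray_domainP s_ge0 _ le_st Q Q_ge1 q a b q_qg qa qb u aub.
have Q_gt0 : 0 < Q by lra.
have h_gt0 : 0 < 2 * K * Q by rewrite !mulr_gt0 //; lra.
have [v [N [v0 vN v_in v_gap v_cover]]] := interval_sampling q_qg.1 h_gt0.
have x_step i : (i < N)%N -> d (q (v i)) (q (v i.+1)) <= sample_jump K Q.
  move=> iN; apply: quasi_geodesic_dist_le q_qg (v_in i) (v_in i.+1) _ => //; first lra.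
  have := v_gap i i.+1; rewrite leqnSn iN subSnn mul1r subrr => /(_ isT) /andP[lo hi].
  by rewrite distrC ger0_norm.
have x_lower i j : (i <= j <= N)%N ->
    (j - i)%:R * (2 * K) - sample_defect K Q <= d (q (v i)) (q (v j)).
  move=> ijN; apply: quasi_geodesic_dist_ge q_qg (v_in i) (v_in j) _ => //.
  have /andP[gap _] := v_gap i j ijN.
  by rewrite mulrBl mul1r distrC (le_trans gap) // ler_norm.
have S_ge0 : 0 <= sample_jump K Q by rewrite addr_ge0 ?mulr_ge0 //; lra.
have c0_ge0 : 0 <= sample_defect K Q by rewrite addr_ge0 //; lra.
have x_first : q (v 0%N) = g s by rewrite v0.
have x_last : q (v N) = g t by rewrite vN.
have [i iN near_i] := v_cover u aub.
have [r rst near_r] := path_near_segment (x := fun i => q (v i)) g_isometry g_contr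
  K_ge1 s_ge0 le_st S_ge0 c0_ge0 x_first x_last x_step x_lower iN.
apply: le_trans (dist_set_le (q u) (_ : (g @` `[s, t]) (g r))) _.
  by exists r; rewrite // in_itv.
have := metric_triangle (q u) (q (v i)) (g r).
have := quasi_geodesic_dist_le (ltW Q_gt0) q_qg aub (v_in i) near_i.
rewrite /contraction_gauge; lra.
Qed.

End ContractingMorse.

Lemma morse_dichotomous_uniform_gauge (R : realType) (X : metricType R) :
  @morse_dichotomous R X -> forall M, morse_gauge M -> exists n : nat,
  forall g : R -> X, geodesic g `[0, +oo[ -> morse M g `[0, +oo[ ->
  morse (contraction_gauge n.+1%:R) g `[0, +oo[.
Proof.
move=> dichotomy M M_gauge; have [C C_contr] := dichotomy M M_gauge.
exists (Num.truncn `|C|) => g g_geod g_morse.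
apply: contracting_ray_morse => //; first by rewrite ler1n.
move=> y y1 y2 p1 p2 yy1 yy2 p1y1 p2y2.
apply: le_trans (C_contr g _ g_geod g_morse y y1 y2 p1 p2 yy1 yy2 p1y1 p2y2) _.
exact: le_trans (ler_norm C) (ltW (truncnS_gt _)).
Qed.

Unset Implicit Arguments.

Theorem corollary2p15 (R : realType) (X : metricType R) :
  @proper_space R X -> @geodesic_space R X -> @morse_dichotomous R X ->
  forall x0 : X, strongly_sigma_compact x0.
Proof.
move=> _ _ dichotomy x0.
have gauge n : morse_gauge (contraction_gauge (n.+1%:R : R)).
  by apply: morse_gauge_contraction; rewrite ler0n.
exists (fun n => contraction_gauge n.+1%:R); split; [exact: gauge | split; [|split]].
- by move=> n Q Q1; apply: contraction_gauge_mono; rewrite ?ler0n ?ler_nat //; lra.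
- apply/seteqP; split.
  + move=> _ [g [g_ray [M [M_gauge g_morse]]] <-].
    have [n n_gauge] := morse_dichotomous_uniform_gauge dichotomy M_gauge.
    by exists n => //; exists g => //; split=> //; exact: n_gauge g_ray.1 g_morse.
  + move=> _ [n _ [g [g_ray g_morse] <-]].
    by exists g => //; split=> //; exists (contraction_gauge n.+1%:R).
- move=> M M_gauge; have [n n_gauge] := morse_dichotomous_uniform_gauge dichotomy M_gauge.
  exists n => _ [g [g_ray g_morse] <-]; exists g => //; split=> //.
  exact: n_gauge g_ray.1 g_morse.
Qed.
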